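(* In the setting of the context (QFSR scheme with $\kappa=1/3$, $\kappa_3=-2/3$, $\theta_2=2/3$), suppose the flux $f$ is a quadratic polynomial in $u$. Let $\mathcal{E}_j=(\Phi_{j+1/2}-\Phi_{j-1/2})/h$ evaluated on exact nodal values. Then as $h\to0$, with derivatives at $x_j$, $$\mathcal{E}_j=\frac{\partial f}{\partial x}+\left[\frac1{120}\frac{\partial f}{\partial u}\frac{\partial^5 u}{\partial x^5}-\frac{5}{216}\frac{\partial^2 f}{\partial u^2}\frac{\partial^2 u}{\partial x^2}\frac{\partial^3 u}{\partial x^3}\right]h^4+O(h^5),$$ where $f$ denotes $f(u(x))$ and $\partial f/\partial u$ is evaluated at $u(x_j)$.
   Context: Let $h>0$, uniform grid $x_i=ih$, $i\in\mathbb{Z}$. Let $u$ be a smooth real function of $x$, $u_i=u(x_i)$; let $f$ (flux) and $D$ (dissipation coefficient) be smooth real functions of one variable. Define successive central differences $(u_x)_i=(u_{i+1}-u_{i-1})/(2h)$, $(u_{xx})_i=((u_x)_{i+1}-(u_x)_{i-1})/(2h)$. For the face $i+1/2$ with $j=i$, $k=i+1$, let $T_j=\frac h4((u_x)_k-(u_x)_j)-\frac{h^2}{4}(u_{xx})_j$, $T_k=\frac h4((u_x)_k-(u_x)_j)-\frac{h^2}{4}(u_{xx})_k$, and reconstructed states (parameters $\kappa,\kappa_3$) $u_L=\kappa\frac{u_j+u_k}{2}+(1-\kappa)[u_j+\frac h2(u_x)_j]+\kappa_3T_j$, $u_R=\kappa\frac{u_j+u_k}{2}+(1-\kappa)[u_k-\frac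 h2(u_x)_k]+\kappa_3T_k$. With $\Delta_L=u_L-u_j$, $\Delta_R=u_R-u_k$ and parameter $\theta_2$, the reconstructed fluxes are $f_L=f(u_j)+f'(u_j)\Delta_L+\frac{\theta_2}{2}f''(u_j)\Delta_L^2$ and $f_R=f(u_k)+f'(u_k)\Delta_R+\frac{\theta_2}{2}f''(u_k)\Delta_R^2$. Numerical flux: $\Phi_{i+1/2}=\frac12(f_L+f_R)-\frac12D_{i+1/2}(u_R-u_L)$, with $D_{i+1/2}=\bar D(u_i,u_{i+1})$ for a smooth symmetric $\bar D$ with $\bar D(v,v)=D(v)$. *)

From Stdlib Require Import Reals ZArith.
From Coquelicot Require Import Coquelicot.
Open Scope R_scope.

Definition smooth1 (g : R -> R) : Prop := forall (n : nat) (x : R), ex_derive_n g n x.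

Fixpoint Ck2 (n : nat) (g : R -> R -> R) : Prop :=
  match n with
  | O => forall x y : R, continuous (fun p : R * R => g (fst p) (snd p)) (x, y)
  | S m =>
      (forall x y, ex_derive (fun t => g t y) x) /\
      (forall x y, ex_derive (fun t => g x t) y) /\
      Ck2 m (fun x y => Derive (fun t => g t y) x) /\
      Ck2 m (fun x y => Derive (fun t => g x t) y)
  end.

Definition smooth2 (g : R -> R -> R) : Prop := forall n, Ck2 n g.

Definition cdx (h : R) (U : Z -> R) (i : Z) : R :=
  (U (i + 1)%Z - U (i - 1)%Z) / (2 * h).

Section Scheme.
Variables (kappa kappa3 theta2 : R) (f : R -> R) (Dbar : R -> R -> R) (h : R) (U : Z -> R).

Definition ux (i : Z) : R := cdx h U i.
Definition uxx (i : Z) : R := cdx h ux i.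

(* Face i+1/2, with j = i, k = i+1. *)
Definition Tj (i : Z) : R := h / 4 * (ux (i + 1)%Z - ux i) - h ^ 2 / 4 * uxx i.
Definition Tk (i : Z) : R := h / 4 * (ux (i + 1)%Z - ux i) - h ^ 2 / 4 * uxx (i + 1)%Z.

Definition uL (i : Z) : R :=
  kappa * ((U i + U (i + 1)%Z) / 2) + (1 - kappa) * (U i + h / 2 * ux i) + kappa3 * Tj i.
Definition uR (i : Z) : R :=
  kappa * ((U i + U (i + 1)%Z) / 2) + (1 - kappa) * (U (i + 1)%Z - h / 2 * ux (i + 1)%Z)
  + kappa3 * Tk i.

Definition fL (i : Z) : R :=
  let dL := uL i - U i in
  f (U i) + Derive f (U i) * dL + theta2 / 2 * Derive_n f 2 (U i) * dL ^ 2.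
Definition fR (i : Z) : R :=
  let dR := uR i - U (i + 1)%Z in
  f (U (i + 1)%Z) + Derive f (U (i + 1)%Z) * dR
  + theta2 / 2 * Derive_n f 2 (U (i + 1)%Z) * dR ^ 2.

(* Numerical flux Phi_{i+1/2}. *)
Definition Phi (i : Z) : R :=
  (fL i + fR i) / 2 - Dbar (U i) (U (i + 1)%Z) / 2 * (uR i - uL i).

Definition Eflux (j : Z) : R := (Phi j - Phi (j - 1)%Z) / h.
End Scheme.

(* For a quadratic flux f(v) = a + b v + c v^2 the reconstructed fluxes are exactly
   fL = f(uL) - (1 - theta2) c (uL - u_j)^2 and fR = f(uR) - (1 - theta2) c (uR - u_k)^2,
   and for kappa = 1/3, kappa3 = -2/3 the states uL, uR are fixed five-point combinations of
   nodal values.  Expanding each node u(x + t h) by Taylor's formula to order h^5 with an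
   O(h^6) remainder, the convective part of E_j is a polynomial in these expansions, and its
   truncated expansion ("jet") is computed exactly.  The dissipative part is O(h^5): the jump
   uR - uL is O(h^5), its change between the faces j -+ 1/2 is O(h^6), and by the symmetry of
   Dbar the change of D_{j+-1/2} is Dbar(u_j, u_{j+1}) - Dbar(u_j, u_{j-1}) = O(h). *)

From Stdlib Require Import Reals ZArith List Lra Lia.
From Coquelicot Require Import Coquelicot.
Import ListNotations.
Open Scope R_scope.

(** * Polynomials as coefficient lists *)

Fixpoint peval (p : list R) (h : R) : R :=
  match p with
  | [] => 0
  | a :: q => a + h * peval q h
  end.

Fixpoint padd (p q : list R) : list R :=
  match p, q with
  | [], _ => q
  | _, [] => p
  | a :: p', b :: q' => (a + b) :: padd p' q'
  end.

Definition pscale (c : R) (p : list R) : list R := map (Rmult c) p.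

Fixpoint pmul (p q : list R) : list R :=
  match p with
  | [] => []
  | a :: p' => padd (pscale a q) (0 :: pmul p' q)
  end.

Lemma peval_padd p q h : peval (padd p q) h = peval p h + peval q h.
Proof.
  revert q; induction p as [|a p IH]; intros [|b q]; simpl; try rewrite IH; ring.
Qed.

Lemma peval_pscale c p h : peval (pscale c p) h = c * peval p h.
Proof. induction p as [|a p IH]; simpl; [|rewrite IH]; ring. Qed.

Lemma peval_pmul p q h : peval (pmul p q) h = peval p h * peval q h.
Proof.
  induction p as [|a p IH]; simpl; [ring|].
  rewrite peval_padd, peval_pscale; simpl; rewrite IH; ring.
Qed.

Lemma peval_app p q h : peval (p ++ q) h = peval p h + h ^ length p * peval q h.
Proof. induction p as [|a p IH]; simpl; [|rewrite IH]; ring. Qed.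

Lemma peval_firstn_skipn k p h :
  peval p h = peval (firstn k p) h + h ^ k * peval (skipn k p) h.
Proof.
  revert p; induction k as [|k IH]; intros [|a p]; simpl; try ring.
  rewrite (IH p); ring.
Qed.

Lemma peval_repeat0 n h : peval (repeat 0 n) h = 0.
Proof. induction n as [|n IH]; simpl; [|rewrite IH]; ring. Qed.

Lemma peval_map_seq (F : nat -> R) n h :
  peval (map F (seq 0 (S n))) h = sum_f_R0 (fun m => F m * h ^ m) n.
Proof.
  induction n as [|n IH]; [simpl; ring|].
  rewrite seq_S, map_app, peval_app, IH, length_map, length_seq; simpl; ring.
Qed.

Definition bigO (k : nat) (g : R -> R) : Prop :=
  exists C, forall h, 0 < h < 1 -> Rabs (g h) <= C * h ^ k.

Lemma bigO_ext k f g : (forall h, 0 < h < 1 -> f h = g h) -> bigO k g -> bigO k f.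
Proof. intros E [C HC]; exists C; intros h Hh; rewrite E by exact Hh; auto. Qed.

Lemma bigO_const c : bigO 0 (fun _ => c).
Proof. exists (Rabs c); intros h _; lra. Qed.

Lemma bigO_pow k : bigO k (fun h => h ^ k).
Proof. exists 1; intros h Hh; rewrite Rabs_pos_eq; [lra | apply pow_le; lra]. Qed.

Lemma bigO_dominated k K f g :
  (forall h, 0 < h < 1 -> Rabs (f h) <= K * Rabs (g h)) -> bigO k g -> bigO k f.
Proof.
  intros Hfg [C HC]; exists (Rabs K * C); intros h Hh.
  specialize (Hfg h Hh); specialize (HC h Hh).
  pose proof (Rle_abs K); pose proof (Rabs_pos K); pose proof (Rabs_pos (g h)).
  rewrite Rmult_assoc; nra.
Qed.

Lemma bigO_add k f g : bigO k f -> bigO k g -> bigO k (fun h => f h + g h).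
Proof.
  intros [C HC] [D HD]; exists (C + D); intros h Hh.
  eapply Rle_trans; [apply Rabs_triang|].
  specialize (HC h Hh); specialize (HD h Hh); lra.
Qed.

Lemma bigO_opp k g : bigO k g -> bigO k (fun h => - g h).
Proof. apply (bigO_dominated _ 1); intros h _; rewrite Rabs_Ropp; lra. Qed.

Lemma bigO_sub k f g : bigO k f -> bigO k g -> bigO k (fun h => f h - g h).
Proof. intros Hf Hg; apply (bigO_add _ f (fun h => - g h) Hf), bigO_opp, Hg. Qed.

Lemma bigO_mult j k f g : bigO j f -> bigO k g -> bigO (j + k) (fun h => f h * g h).
Proof.
  intros [C HC] [D HD]; exists (C * D); intros h Hh.
  rewrite Rabs_mult, pow_add.
  replace (C * D * (h ^ j * h ^ k)) with ((C * h ^ j) * (D * h ^ k)) by ring.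
  apply Rmult_le_compat; auto using Rabs_pos.
Qed.

Lemma bigO_weaken j k g : (j <= k)%nat -> bigO k g -> bigO j g.
Proof.
  intros Hjk [C HC]; exists (Rabs C); intros h Hh.
  assert (Hpow : h ^ k <= h ^ j).
  { replace k with (j + (k - j))%nat by lia; rewrite pow_add.
    pose proof (pow_lt h j ltac:(lra)).
    assert (h ^ (k - j) <= 1) by (rewrite <- (pow1 (k - j)); apply pow_incr; lra).
    nra. }
  pose proof (pow_lt h k ltac:(lra)); pose proof (Rle_abs C); pose proof (Rabs_pos C).
  specialize (HC h Hh); nra.
Qed.

Lemma bigO_div_h k g : bigO (S k) g -> bigO k (fun h => g h / h).
Proof.
  intros [C HC]; exists C; intros h Hh; specialize (HC h Hh).
  unfold Rdiv; rewrite Rabs_mult, Rabs_inv, (Rabs_pos_eq h) by lra.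
  apply (Rmult_le_reg_r h); [lra|].
  rewrite Rmult_assoc, Rinv_l by lra; simpl in HC; lra.
Qed.

Lemma bigO_peval p : bigO 0 (peval p).
Proof.
  induction p as [|a p IH]; simpl.
  - exists 0; intros h _; rewrite Rabs_R0; lra.
  - apply bigO_add; [apply bigO_const|].
    apply (bigO_mult 0 0); [|exact IH].
    exists 1; intros h Hh; rewrite Rabs_pos_eq; simpl; lra.
Qed.

Lemma bigO_peval_firstn k p : bigO k (fun h => peval p h - peval (firstn k p) h).
Proof.
  apply (bigO_ext _ _ (fun h => h ^ k * peval (skipn k p) h));
    [intros h _; rewrite (peval_firstn_skipn k p h); ring|].
  rewrite <- (Nat.add_0_r k) at 1; apply bigO_mult; [apply bigO_pow | apply bigO_peval].
Qed.

(** * Jets: truncated expansions in powers of h *)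

Definition has_jet (k : nat) (g : R -> R) (p : list R) : Prop :=
  bigO k (fun h => g h - peval p h).

Lemma jet_ext k f g p :
  (forall h, 0 < h < 1 -> f h = g h) -> has_jet k g p -> has_jet k f p.
Proof. intros E; apply bigO_ext; intros h Hh; rewrite E by exact Hh; reflexivity. Qed.

Lemma jet_of_bigO k g : bigO k g -> has_jet k g [].
Proof. apply bigO_ext; intros h _; simpl; ring. Qed.

Lemma bigO_of_jet_repeat0 k n g : has_jet k g (repeat 0 n) -> bigO k g.
Proof. apply bigO_ext; intros h _; rewrite peval_repeat0; ring. Qed.

Lemma jet_bounded k g p : has_jet k g p -> bigO 0 g.
Proof.
  intros Hg; apply (bigO_ext _ _ (fun h => (g h - peval p h) + peval p h)); [intros; ring|].
  apply bigO_add; [apply (bigO_weaken _ k); [lia | exact Hg] | apply bigO_peval].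
Qed.

Lemma jet_weaken j k g p : (j <= k)%nat -> has_jet k g p -> has_jet j g p.
Proof. apply bigO_weaken. Qed.

Lemma jet_firstn_iff k g p : has_jet k g (firstn k p) <-> has_jet k g p.
Proof.
  pose proof (bigO_peval_firstn k p) as Hp; split; intros Hg.
  - apply (bigO_ext _ _ (fun h => (g h - peval (firstn k p) h)
                                 - (peval p h - peval (firstn k p) h)));
      [intros; ring | apply bigO_sub; assumption].
  - apply (bigO_ext _ _ (fun h => (g h - peval p h) + (peval p h - peval (firstn k p) h)));
      [intros; ring | apply bigO_add; assumption].
Qed.

Lemma jet_firstn_eq k g p q :
  has_jet k g p -> firstn k p = firstn k q -> has_jet k g q.
Proof. intros Hg Hpq; apply jet_firstn_iff; rewrite <- Hpq; apply jet_firstn_iff, Hg. Qed.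

Lemma jet_const k c : has_jet k (fun _ => c) [c].
Proof.
  exists 0; intros h Hh; simpl.
  replace (c - (c + h * 0)) with 0 by ring; rewrite Rabs_R0; lra.
Qed.

Lemma jet_add k f g p q :
  has_jet k f p -> has_jet k g q -> has_jet k (fun h => f h + g h) (padd p q).
Proof.
  intros Hf Hg; apply (bigO_ext _ _ (fun h => (f h - peval p h) + (g h - peval q h)));
    [intros; rewrite peval_padd; ring | apply bigO_add; assumption].
Qed.

Lemma jet_sub k f g p q :
  has_jet k f p -> has_jet k g q ->
  has_jet k (fun h => f h - g h) (padd p (pscale (-1) q)).
Proof.
  intros Hf Hg; apply (bigO_ext _ _ (fun h => (f h - peval p h) - (g h - peval q h)));
    [intros; rewrite peval_padd, peval_pscale; ring | apply bigO_sub; assumption].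
Qed.

Lemma jet_mul k f g p q :
  has_jet k f p -> has_jet k g q -> has_jet k (fun h => f h * g h) (firstn k (pmul p q)).
Proof.
  intros Hf Hg; apply jet_firstn_iff.
  apply (bigO_ext _ _ (fun h => (f h - peval p h) * g h + peval p h * (g h - peval q h)));
    [intros; rewrite peval_pmul; ring|].
  apply bigO_add.
  - rewrite <- (Nat.add_0_r k); apply bigO_mult; [exact Hf | exact (jet_bounded _ _ _ Hg)].
  - apply (bigO_mult 0 k); [apply bigO_peval | exact Hg].
Qed.

Lemma jet_sqr k g p : has_jet k g p -> has_jet k (fun h => g h ^ 2) (firstn k (pmul p p)).
Proof.
  intros Hg; apply (jet_ext _ _ (fun h => g h * g h)); [intros; ring | apply jet_mul; exact Hg].
Qed.

Lemma jet_div_h k g p : has_jet (S k) g (0 :: p) -> has_jet k (fun h => g h / h) p.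
Proof.
  intros Hg; apply bigO_div_h in Hg; refine (bigO_ext _ _ _ _ Hg).
  intros h Hh; simpl; field; lra.
Qed.

Lemma derivable_bounded_on (g : R -> R) lo hi :
  (forall t, ex_derive g t) -> exists M, forall t, lo <= t <= hi -> Rabs (g t) <= M.
Proof.
  intros Hg; destruct (Rle_dec lo hi) as [Hle|Hgt]; [|exists 0; intros t Ht; lra].
  assert (Hc : forall t, lo <= t <= hi -> continuity_pt g t)
    by (intros t _; apply continuity_pt_filterlim; exact (ex_derive_continuous g t (Hg t))).
  destruct (continuity_ab_maj g lo hi Hle Hc) as [tmax [Hmax _]].
  destruct (continuity_ab_min g lo hi Hle Hc) as [tmin [Hmin _]].
  exists (Rabs (g tmax) + Rabs (g tmin)); intros t Ht.
  specialize (Hmax t Ht); specialize (Hmin t Ht).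
  pose proof (Rle_abs (g tmax)); pose proof (Rle_abs (- g tmin)); rewrite Rabs_Ropp in *.
  pose proof (Rabs_pos (g tmax)); pose proof (Rabs_pos (g tmin)).
  apply Rabs_le; lra.
Qed.

Lemma derivable_lipschitz_on (g : R -> R) lo hi :
  (forall t, ex_derive g t) -> (forall t, ex_derive (Derive g) t) ->
  exists K, forall a b, lo <= a <= hi -> lo <= b <= hi -> Rabs (g b - g a) <= K * Rabs (b - a).
Proof.
  intros Hg Hg'; destruct (derivable_bounded_on (Derive g) lo hi Hg') as [K HK].
  exists K; intros a b Ha Hb.
  destruct (MVT_gen g a b (Derive g)) as [c [Hc ->]].
  - intros t _; apply Derive_correct, Hg.
  - intros t _; apply continuity_pt_filterlim; exact (ex_derive_continuous g t (Hg t)).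
  - rewrite Rabs_mult; apply Rmult_le_compat_r; [apply Rabs_pos|].
    apply HK; revert Hc; unfold Rmin, Rmax; destruct (Rle_dec a b); lra.
Qed.

Lemma smooth2_derivable_snd (g : R -> R -> R) v :
  smooth2 g ->
  (forall t, ex_derive (fun s => g v s) t) /\ (forall t, ex_derive (Derive (fun s => g v s)) t).
Proof.
  intros Hg; destruct (Hg 1%nat) as [_ [H1 _]]; destruct (Hg 2%nat) as [_ [_ [_ [_ [H2 _]]]]].
  split; intros t; [apply H1 | apply (H2 v t)].
Qed.

(** * Taylor expansion along a ray *)

Definition taylor_coeff (g : R -> R) (x : R) (k : nat) : R := Derive_n g k x / INR (fact k).

(* Keeps [cbn] from unfolding the coefficients into iterated derivatives. *)
Arguments taylor_coeff : simpl never.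

Lemma taylor_lagrange_pos g n x d :
  smooth1 g -> 0 < d ->
  exists z, x < z < x + d /\
    g (x + d) = sum_f_R0 (fun m => taylor_coeff g x m * d ^ m) n
                + taylor_coeff g z (S n) * d ^ S n.
Proof.
  intros Hg Hd; destruct (Taylor_Lagrange g n x (x + d)) as [z [Hz E]];
    [lra | intros; apply Hg|].
  exists z; split; [exact Hz|]; rewrite E; replace (x + d - x) with d by ring.
  unfold taylor_coeff; f_equal; [apply sum_eq; intros m _|];
    field; apply INR_fact_neq_0.
Qed.

Lemma taylor_lagrange_signed g n x d :
  smooth1 g ->
  exists z, Rabs (z - x) <= Rabs d /\
    g (x + d) = sum_f_R0 (fun m => taylor_coeff g x m * d ^ m) n
                + taylor_coeff g z (S n) * d ^ S n.
Proof.
  intros Hg; destruct (Rtotal_order d 0) as [Hd|[Hd|Hd]].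
  - set (v := fun y => g (- y)).
    assert (Hv : smooth1 v)
      by (intros k t; apply ex_derive_n_comp_opp, filter_forall; intros; apply Hg).
    assert (Hcoeff : forall k y, taylor_coeff v y k = (-1) ^ k * taylor_coeff g (- y) k).
    { intros k y; unfold taylor_coeff, v; rewrite Derive_n_comp_opp;
        [field; apply INR_fact_neq_0 | apply filter_forall; intros; apply Hg]. }
    destruct (taylor_lagrange_pos v n (- x) (- d) Hv ltac:(lra)) as [z [Hz E]].
    exists (- z); split; [rewrite Rabs_left, Rabs_left; lra|].
    replace (g (x + d)) with (v (- x + - d)) by (unfold v; f_equal; ring).
    assert (Hsign : forall m, (-1) ^ m * (- d) ^ m = d ^ m)
      by (intros m; rewrite <- Rpow_mult_distr; f_equal; ring).
    rewrite E; f_equal; [apply sum_eq; intros m _|];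
      rewrite Hcoeff, ?Ropp_involutive, <- Hsign, (Rmult_comm ((-1) ^ _)), Rmult_assoc;
      reflexivity.
  - subst d; exists x; split; [rewrite Rminus_diag, Rabs_R0; lra|].
    assert (Hsum : forall (c : nat -> R) k, sum_f_R0 (fun m => c m * 0 ^ m) k = c 0%nat)
      by (intros c k; induction k as [|k IH]; simpl; [|rewrite IH]; ring).
    rewrite Rplus_0_r, Hsum, pow_i, Rmult_0_r, Rplus_0_r by lia.
    unfold taylor_coeff; simpl; field.
  - destruct (taylor_lagrange_pos g n x d Hg Hd) as [z [Hz E]].
    exists z; split; [rewrite !Rabs_pos_eq; lra | exact E].
Qed.

Lemma taylor_jet g n x t :
  smooth1 g ->
  has_jet (S n) (fun h => g (x + t * h)) (map (fun k => taylor_coeff g x k * t ^ k) (seq 0 (S n))).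
Proof.
  intros Hg.
  destruct (derivable_bounded_on (Derive_n g (S n)) (x - Rabs t) (x + Rabs t)) as [M HM];
    [intros y; apply (Hg (S (S n)))|].
  exists (M / INR (fact (S n)) * Rabs t ^ S n); intros h Hh.
  destruct (taylor_lagrange_signed g n x (t * h) Hg) as [z [Hz ->]].
  rewrite peval_map_seq.
  replace (sum_f_R0 _ n + _ - _) with (taylor_coeff g z (S n) * (t * h) ^ S n)
    by (rewrite <- (sum_eq (fun m => taylor_coeff g x m * t ^ m * h ^ m)); [ring |
        intros m _; rewrite Rpow_mult_distr; ring]).
  rewrite Rabs_mult, <- RPow_abs, Rabs_mult, (Rabs_pos_eq h) by lra.
  rewrite Rpow_mult_distr, <- Rmult_assoc.
  apply Rmult_le_compat_r; [apply pow_le; lra|].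
  apply Rmult_le_compat_r; [apply pow_le, Rabs_pos|].
  unfold taylor_coeff, Rdiv; rewrite Rabs_mult, Rabs_inv, (Rabs_pos_eq (INR _)) by apply pos_INR.
  apply Rmult_le_compat_r; [apply Rlt_le, Rinv_0_lt_compat, INR_fact_lt_0|].
  apply HM; rewrite Rabs_mult, (Rabs_pos_eq h) in Hz by lra.
  pose proof (Rabs_pos t); apply Rabs_le_between'; nra.
Qed.

(** * The reconstruction for a quadratic flux *)

Section QuadraticFlux.
Variables (f : R -> R) (a b c : R).
Hypothesis Hf : forall v, f v = a + b * v + c * v ^ 2.

Lemma is_derive_quadratic v : is_derive f v (b + 2 * c * v).
Proof.
  apply (is_derive_ext (fun v => a + b * v + c * v ^ 2)); [intros; symmetry; apply Hf|].
  auto_derive; auto; ring.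
Qed.

Lemma Derive_quadratic v : Derive f v = b + 2 * c * v.
Proof. apply is_derive_unique, is_derive_quadratic. Qed.

Lemma Derive2_quadratic v : Derive_n f 2 v = 2 * c.
Proof.
  change (Derive (Derive f) v = 2 * c).
  rewrite (Derive_ext (Derive f) (fun v => b + 2 * c * v)) by exact Derive_quadratic.
  apply is_derive_unique; auto_derive; auto; ring.
Qed.

Lemma Derive_comp_quadratic (u : R -> R) x :
  ex_derive u x -> Derive (fun y => f (u y)) x = Derive f (u x) * Derive u x.
Proof.
  intros Hu; rewrite Derive_comp, Rmult_comm; [reflexivity | | exact Hu].
  eexists; apply is_derive_quadratic.
Qed.

Lemma fL_quadratic kappa kappa3 theta2 h U i :
  fL kappa kappa3 theta2 f h U i
  = f (uL kappa kappa3 h U i) - (1 - theta2) * c * (uL kappa kappa3 h U i - U i) ^ 2.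
Proof. unfold fL; cbv zeta; rewrite Derive_quadratic, Derive2_quadratic, !Hf; field. Qed.

Lemma fR_quadratic kappa kappa3 theta2 h U i :
  fR kappa kappa3 theta2 f h U i
  = f (uR kappa kappa3 h U i) - (1 - theta2) * c * (uR kappa kappa3 h U i - U (i + 1)%Z) ^ 2.
Proof. unfold fR; cbv zeta; rewrite Derive_quadratic, Derive2_quadratic, !Hf; field. Qed.

End QuadraticFlux.

Lemma uL_qfsr h U i :
  h <> 0 ->
  uL (1/3) (-2/3) h U i
  = 1/24 * U (i - 2)%Z - 1/4 * U (i - 1)%Z + 5/6 * U i + 5/12 * U (i + 1)%Z
    - 1/24 * U (i + 2)%Z.
Proof.
  intros Hh; unfold uL, Tj, uxx, ux, cdx.
  replace (i + 1 + 1)%Z with (i + 2)%Z by lia; replace (i + 1 - 1)%Z with i by lia;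
  replace (i - 1 + 1)%Z with i by lia; replace (i - 1 - 1)%Z with (i - 2)%Z by lia.
  field; exact Hh.
Qed.

Lemma uR_qfsr h U i :
  h <> 0 ->
  uR (1/3) (-2/3) h U i
  = - 1/24 * U (i - 1)%Z + 5/12 * U i + 5/6 * U (i + 1)%Z - 1/4 * U (i + 2)%Z
    + 1/24 * U (i + 3)%Z.
Proof.
  intros Hh; unfold uR, Tk, uxx, ux, cdx.
  replace (i + 1 + 1 + 1)%Z with (i + 3)%Z by lia;
  replace (i + 1 + 1 - 1)%Z with (i + 1)%Z by lia;
  replace (i + 1 - 1 + 1)%Z with (i + 1)%Z by lia;
  replace (i + 1 - 1 - 1)%Z with (i - 1)%Z by lia;
  replace (i + 1 + 1)%Z with (i + 2)%Z by lia; replace (i + 1 - 1)%Z with i by lia.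
  field; exact Hh.
Qed.

Lemma Eflux_split kappa kappa3 theta2 f Dbar h U j :
  h <> 0 ->
  Eflux kappa kappa3 theta2 f Dbar h U j
  = / 2 * ((fL kappa kappa3 theta2 f h U j + fR kappa kappa3 theta2 f h U j
            - fL kappa kappa3 theta2 f h U (j - 1) - fR kappa kappa3 theta2 f h U (j - 1)) / h)
    - (Dbar (U j) (U (j + 1)%Z) * (uR kappa kappa3 h U j - uL kappa kappa3 h U j)
       - Dbar (U (j - 1)%Z) (U j) * (uR kappa kappa3 h U (j - 1) - uL kappa kappa3 h U (j - 1)))
      / (2 * h).
Proof. intros Hh; unfold Eflux, Phi; rewrite Z.sub_add; field; exact Hh. Qed.

Definition grid (u : R -> R) (x h : R) : Z -> R := fun i => u (x + IZR i * h).

Ltac jet_build :=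
  first
    [ eassumption
    | lazymatch goal with
      | |- has_jet _ (fun _ => ?c) _ => apply jet_const
      | |- has_jet _ (fun h => _ + _) _ => eapply jet_add; [jet_build | jet_build]
      | |- has_jet _ (fun h => _ - _) _ => eapply jet_sub; [jet_build | jet_build]
      | |- has_jet _ (fun h => _ * _) _ => eapply jet_mul; [jet_build | jet_build]
      | |- has_jet _ (fun h => _ ^ 2) _ => eapply jet_sqr; jet_build
      | |- has_jet _ (fun h => grid _ _ h _) _ => unfold grid; apply taylor_jet; assumption
      end ].

Ltac jet_coeffs := cbn; repeat apply (f_equal2 (@cons R)); try reflexivity; field.

(* The rewriting is done with the unknown right-hand side hidden behind [rhs]: rewriting
   in a goal that contains the evar directly makes unification very slow. *)
Ltac jet_expand rewr :=
  eapply jet_firstn_eq;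
    [ eapply jet_ext;
      [ intros h Hh;
        lazymatch goal with
        | |- _ = ?r =>
            let rhs := fresh "rhs" in
            set (rhs := r); rewr; simpl Z.add; simpl Z.sub; subst rhs; reflexivity
        end
      | jet_build ]
    | jet_coeffs ].

Section GridExpansion.
Variables (u : R -> R) (x : R).
Hypothesis Hu : smooth1 u.
Notation A := (taylor_coeff u x).
Notation uLq h i := (uL (1/3) (-2/3) h (grid u x h) i).
Notation uRq h i := (uR (1/3) (-2/3) h (grid u x h) i).

Lemma uL_right_face_jet :
  has_jet 6 (fun h => uLq h 0) [A 0; A 1 / 2; A 2 / 6; 0; A 4 / 6; -2 * A 5].
Proof. jet_expand ltac:(rewrite uL_qfsr by lra). Qed.

Lemma uR_right_face_jet :
  has_jet 6 (fun h => uRq h 0) [A 0; A 1 / 2; A 2 / 6; 0; A 4 / 6; 3 * A 5].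
Proof. jet_expand ltac:(rewrite uR_qfsr by lra). Qed.

Lemma uL_left_face_jet :
  has_jet 6 (fun h => uLq h (-1)) [A 0; - A 1 / 2; A 2 / 6; 0; A 4 / 6; -3 * A 5].
Proof. jet_expand ltac:(rewrite uL_qfsr by lra). Qed.

Lemma uR_left_face_jet :
  has_jet 6 (fun h => uRq h (-1)) [A 0; - A 1 / 2; A 2 / 6; 0; A 4 / 6; 2 * A 5].
Proof. jet_expand ltac:(rewrite uR_qfsr by lra). Qed.

Lemma right_face_jump_bigO : bigO 5 (fun h => uRq h 0 - uLq h 0).
Proof.
  pose proof uL_right_face_jet; pose proof uR_right_face_jet.
  apply (bigO_of_jet_repeat0 _ 5).
  eapply jet_firstn_eq; [apply (jet_weaken _ 6); [lia | jet_build] | jet_coeffs].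
Qed.

Lemma face_jump_difference_bigO :
  bigO 6 (fun h => (uRq h 0 - uLq h 0) - (uRq h (-1) - uLq h (-1))).
Proof.
  pose proof uL_right_face_jet; pose proof uR_right_face_jet; pose proof uL_left_face_jet;
    pose proof uR_left_face_jet.
  apply (bigO_of_jet_repeat0 _ 6).
  eapply jet_firstn_eq; [jet_build | jet_coeffs].
Qed.

Lemma grid_central_diff_bigO : bigO 1 (fun h => grid u x h 1 - grid u x h (-1)).
Proof.
  apply (bigO_of_jet_repeat0 _ 1).
  eapply jet_firstn_eq; [apply (jet_weaken _ 6); [lia | jet_build] | jet_coeffs].
Qed.

Lemma reconstructed_flux_difference_jet f a b c :
  (forall v, f v = a + b * v + c * v ^ 2) ->
  has_jet 6 (fun h => fL (1/3) (-2/3) (2/3) f h (grid u x h) 0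
                      + fR (1/3) (-2/3) (2/3) f h (grid u x h) 0
                      - fL (1/3) (-2/3) (2/3) f h (grid u x h) (-1)
                      - fR (1/3) (-2/3) (2/3) f h (grid u x h) (-1))
    [0; 2 * (b + 2 * c * A 0) * A 1; 0; 0; 0;
     2 * ((b + 2 * c * A 0) * A 5 - 5/9 * c * A 2 * A 3)].
Proof.
  intros Hf; pose proof uL_right_face_jet; pose proof uR_right_face_jet;
    pose proof uL_left_face_jet; pose proof uR_left_face_jet.
  jet_expand ltac:(rewrite !(fL_quadratic f a b c Hf), !(fR_quadratic f a b c Hf), !Hf).
Qed.

Lemma grid_neighbours_bounded :
  exists M, forall h t, 0 < h < 1 -> -1 <= t <= 1 -> - M <= u (x + t * h) <= M.
Proof.
  destruct (derivable_bounded_on u (x - 1) (x + 1)) as [M HM]; [intros; apply (Hu 1%nat)|].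
  exists M; intros h t Hh Ht; specialize (HM (x + t * h) ltac:(nra)).
  pose proof (Rle_abs (u (x + t * h))); pose proof (Rle_abs (- u (x + t * h))).
  rewrite Rabs_Ropp in *; lra.
Qed.

Lemma grid_comp_left_bounded (g : R -> R) :
  (forall t, ex_derive g t) -> bigO 0 (fun h => g (grid u x h (-1))).
Proof.
  intros Hg; destruct grid_neighbours_bounded as [M HM].
  destruct (derivable_bounded_on g (- M) M Hg) as [Mg HMg].
  apply (bigO_dominated _ Mg _ (fun _ => 1)); [|apply bigO_const].
  intros h Hh; rewrite Rabs_R1, Rmult_1_r; apply HMg; unfold grid; apply HM; lra.
Qed.

Lemma grid_comp_central_diff_bigO (g : R -> R) :
  (forall t, ex_derive g t) -> (forall t, ex_derive (Derive g) t) ->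
  bigO 1 (fun h => g (grid u x h 1) - g (grid u x h (-1))).
Proof.
  intros Hg Hg'; destruct grid_neighbours_bounded as [M HM].
  destruct (derivable_lipschitz_on g (- M) M Hg Hg') as [K HK].
  refine (bigO_dominated _ K _ _ _ grid_central_diff_bigO); intros h Hh.
  apply HK; unfold grid; apply HM; lra.
Qed.

Lemma dissipation_bigO Dbar :
  smooth2 Dbar -> (forall v w, Dbar v w = Dbar w v) ->
  bigO 5 (fun h => (Dbar (grid u x h 0) (grid u x h 1) * (uRq h 0 - uLq h 0)
                    - Dbar (grid u x h (-1)) (grid u x h 0) * (uRq h (-1) - uLq h (-1)))
                   / (2 * h)).
Proof.
  intros HD Hsym; set (g := fun t => Dbar (u x) t).
  destruct (smooth2_derivable_snd Dbar (u x) HD) as [Hg Hg'].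
  apply (bigO_ext _ _ (fun h =>
    / 2 * (((g (grid u x h 1) - g (grid u x h (-1))) * (uRq h 0 - uLq h 0)
           + g (grid u x h (-1)) * ((uRq h 0 - uLq h 0) - (uRq h (-1) - uLq h (-1)))) / h))).
  { intros h Hh; unfold g; replace (grid u x h 0) with (u x) by (unfold grid; f_equal; ring).
    rewrite (Hsym (grid u x h (-1))); field; lra. }
  apply (bigO_mult 0 5); [apply bigO_const | apply bigO_div_h, bigO_add].
  - apply (bigO_mult 1 5); [apply grid_comp_central_diff_bigO; assumption |].
    exact right_face_jump_bigO.
  - apply (bigO_mult 0 6); [apply grid_comp_left_bounded; assumption |].
    exact face_jump_difference_bigO.
Qed.

Lemma Eflux_qfsr_jet f a b c Dbar :
  (forall v, f v = a + b * v + c * v ^ 2) ->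
  smooth2 Dbar -> (forall v w, Dbar v w = Dbar w v) ->
  has_jet 5 (fun h => Eflux (1/3) (-2/3) (2/3) f Dbar h (grid u x h) 0)
    [(b + 2 * c * A 0) * A 1; 0; 0; 0; (b + 2 * c * A 0) * A 5 - 5/9 * c * A 2 * A 3].
Proof.
  intros Hf HD Hsym.
  pose proof (jet_div_h _ _ _ (reconstructed_flux_difference_jet f a b c Hf)).
  pose proof (jet_of_bigO _ _ (dissipation_bigO Dbar HD Hsym)).
  jet_expand ltac:(rewrite Eflux_split by lra).
Qed.

End GridExpansion.

Theorem mainTheorem7 :
  forall (u f D : R -> R) (Dbar : R -> R -> R) (a b c : R),
    (forall v, f v = a + b * v + c * v ^ 2) ->
    smooth1 u -> smooth1 D -> smooth2 Dbar ->
    (forall v w, Dbar v w = Dbar w v) ->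
    (forall v, Dbar v v = D v) ->
    forall x : R,
      exists C delta : R, 0 < delta /\
        forall h : R, 0 < h < delta ->
          Rabs (Eflux (1/3) (-2/3) (2/3) f Dbar h
                      (fun i : Z => u (x + IZR i * h)) 0%Z
                - Derive (fun y => f (u y)) x
                - (1/120 * Derive f (u x) * Derive_n u 5 x
                   - 5/216 * Derive_n f 2 (u x) * Derive_n u 2 x * Derive_n u 3 x) * h ^ 4)
          <= C * h ^ 5.
Proof.
  intros u f D Dbar a b c Hf Hu _ HD Hsym _ x.
  destruct (Eflux_qfsr_jet u x Hu f a b c Dbar Hf HD Hsym) as [C HC].
  exists C, 1; split; [lra|]; intros h Hh.
  change (fun i : Z => u (x + IZR i * h)) with (grid u x h).
  rewrite (Derive_comp_quadratic f a b c Hf u x (Hu 1%nat x)), (Derive_quadratic f a b c Hf),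
    (Derive2_quadratic f a b c Hf).
  change (Derive u x) with (Derive_n u 1 x).
  assert (HA : forall k, Derive_n u k x = INR (fact k) * taylor_coeff u x k)
    by (intros k; unfold taylor_coeff; field; apply INR_fact_neq_0).
  change (u x) with (Derive_n u 0 x); rewrite !HA.
  refine (Rle_trans _ _ _ (Req_le _ _ _) (HC h Hh)); f_equal; simpl; field.
Qed.
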